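(* Let $R$ be an integral domain of characteristic $0$ and let $\zeta,\zeta'$ be roots of unity in $R$. The following are equivalent: (1) $(q-\zeta)\Rightarrow_R(q-\zeta')$; (2) $R$ is $(\zeta-\zeta')$-adically separated, i.e. $\bigcap_{j\ge0}(\zeta-\zeta')^jR=(0)$; (3) the order of $\zeta^{-1}\zeta'$ is a power of some prime $p$ such that $R$ is $p$-adically separated, i.e. $\bigcap_{j\ge0}p^jR=(0)$.
   Context: $q$ is an indeterminate. For monic $f,g\in R[q]$ write $f\Rightarrow_R g$ if there exist an ideal $I\subset R$ with $\bigcap_{j\ge0}I^j=(0)$ and an integer $m\ge0$ with $f^m\in(g)+I[q]$. (A power $p^0=1$ counts as a power of $p$.) *)

From HB Require Import structures.
From mathcomp Require Import all_boot all_order all_algebra.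
Set Implicit Arguments. Unset Strict Implicit. Unset Printing Implicit Defensive.
Import Order.TTheory GRing.Theory Num.Theory.
Local Open Scope ring_scope.

Definition is_ideal (R : comNzRingType) (I : R -> Prop) : Prop :=
  [/\ I 0, (forall x y, I x -> I y -> I (x + y)) & (forall r x, I x -> I (r * x))].

Fixpoint ideal_pow (R : comNzRingType) (I : R -> Prop) (j : nat) : R -> Prop :=
  match j with
  | 0%N => fun _ => True
  | j'.+1 => fun x => exists s : seq (R * R),
      x = \sum_(ab <- s) ab.1 * ab.2 /\
      (forall ab, ab \in s -> ideal_pow I j' ab.1 /\ I ab.2)
  end.

Definition ideal_separated (R : comNzRingType) (I : R -> Prop) : Prop :=
  forall x, (forall j, ideal_pow I j x) -> x = 0.

Definition adically_separated (R : comNzRingType) (a : R) : Prop :=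
  forall x, (forall j : nat, exists y, x = a ^+ j * y) -> x = 0.

(* f =>_R g : exists an ideal I with intersection of the I^j = 0 and m >= 0
   with f^m in (g) + I[q]. *)
Definition poly_implies (R : comNzRingType) (f g : {poly R}) : Prop :=
  exists (I : R -> Prop) (m : nat), is_ideal I /\ ideal_separated I /\
    exists h : {poly R}, forall i : nat, I ((f ^+ m - g * h)`_i).

Definition is_root_of_unity_R (R : comNzRingType) (z : R) : Prop :=
  exists n : nat, (0 < n)%N /\ z ^+ n = 1.

From HB Require Import structures.
From mathcomp Require Import all_boot all_order all_algebra.
From mathcomp Require Import ring.
Import Order.TTheory GRing.Theory Num.Theory.
Set Implicit Arguments. Unset Strict Implicit.
Local Open Scope ring_scope.

(* Evaluating f^m - g h at z' puts (z' - z)^m in I, which gives (1) <-> (2)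
   over any commutative ring.  For (2) <-> (3) write z - z' = z (1 - w) with
   w := z^-1 z' and z a unit.  A prime q dividing the order d of w lies in the
   ideal (1 - w): for the primitive q-th root eta = w^(d/q),
   q = sum_(i < q) (1 - eta^i).  Two distinct such primes would put 1 in (1 - w),
   so if R is (1 - w)-adically separated then d = p^k and R is p-adically
   separated. *)

Definition divides (R : comNzRingType) (a x : R) : Prop := exists c, x = a * c.

Section Divides.
Variable R : comNzRingType.
Implicit Types a x y : R.

Lemma divides0 a : divides a 0.
Proof. by exists 0; rewrite mulr0. Qed.

Lemma dividesD a x y : divides a x -> divides a y -> divides a (x + y).
Proof. by move=> [c ->] [d ->]; exists (c + d); rewrite mulrDr. Qed.

Lemma dividesN a x : divides a x -> divides a (- x).
Proof. by move=> [c ->]; exists (- c); rewrite mulrN. Qed.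

Lemma dividesB a x y : divides a x -> divides a y -> divides a (x - y).
Proof. by move=> ax ay; apply: dividesD ax (dividesN ay). Qed.

Lemma dividesMr a x y : divides a x -> divides a (x * y).
Proof. by move=> [c ->]; exists (c * y); rewrite mulrA. Qed.

Lemma dividesMl a x y : divides a y -> divides a (x * y).
Proof. by rewrite mulrC; apply: dividesMr. Qed.

Lemma divides_sum a (I : Type) (r : seq I) (P : pred I) (F : I -> R) :
  (forall i, P i -> divides a (F i)) -> divides a (\sum_(i <- r | P i) F i).
Proof. by move=> aF; elim/big_ind: _ => //; [exact: divides0 | exact: dividesD]. Qed.

Lemma divides_ideal a : is_ideal (divides a).
Proof. by split; [exact: divides0 | exact: dividesD | move=> r x; apply: dividesMl]. Qed.

Lemma divides_subrX a x y n : divides a (x - y) -> divides a (x ^+ n - y ^+ n).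
Proof. by rewrite subrXX; apply: dividesMr. Qed.

Lemma divides_subr1X x n : divides (1 - x) (1 - x ^+ n).
Proof. by rewrite -[1 - _ ^+ _]opprB subrX1 -mulNr opprB; eexists. Qed.

Lemma divides1_coprime a m n :
  coprime m n -> divides a m%:R -> divides a n%:R -> divides a 1.
Proof.
move=> co_mn am an; have [m0 | m_gt0] := posnP m.
  by move: co_mn an; rewrite m0 /coprime gcd0n => /eqP ->.
have [u _] := Bezoutl n m_gt0; rewrite (eqP co_mn) => /dvdnP [v uv].
have -> : (1 : R) = v%:R * m%:R - u%:R * n%:R by rewrite -!natrM -uv natrD addrK.
by apply: dividesB; apply: dividesMl.
Qed.

End Divides.

Section AdicSeparation.
Variable R : comNzRingType.
Implicit Types a b c x : R.

Lemma adically_separated0 : adically_separated (0 : R).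
Proof. by move=> x /(_ 1%N) [y ->]; rewrite expr1 mul0r. Qed.

Lemma adically_separated_divides a b n :
  divides a (b ^+ n) -> adically_separated a -> adically_separated b.
Proof.
move=> [c bc] sep_a x xb; apply: sep_a => j.
have [y ->] := xb (n * j)%N.
by exists (c ^+ j * y); rewrite exprM bc exprMn mulrA.
Qed.

Lemma ideal_pow_exprM (I : R -> Prop) c j y : I c -> ideal_pow I j (c ^+ j * y).
Proof.
move=> Ic; elim: j y => [|j IHj] y //=.
exists [:: (c ^+ j * y, c)]; split; first by rewrite big_seq1 /= exprSr; ring.
by move=> ab; rewrite inE => /eqP -> /=.
Qed.

Lemma ideal_separated_adically (I : R -> Prop) c :
  ideal_separated I -> I c -> adically_separated c.
Proof.
move=> sepI Ic x xc; apply: sepI => j.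
by have [y ->] := xc j; apply: ideal_pow_exprM.
Qed.

Lemma ideal_pow_divides a j x : ideal_pow (divides a) j x -> divides (a ^+ j) x.
Proof.
elim: j x => [|j IHj] x /=; first by exists x; rewrite expr0 mul1r.
move=> [s [-> s_pow]]; rewrite big_seq.
apply: divides_sum => ab /s_pow [/IHj [c ->] [e ->]].
by exists (c * e); rewrite exprSr; ring.
Qed.

Lemma adically_separated_ideal a :
  adically_separated a -> ideal_separated (divides a).
Proof. by move=> sep_a x x_pow; apply: sep_a => j; apply: ideal_pow_divides. Qed.

Lemma ideal_horner (I : R -> Prop) (p : {poly R}) x :
  is_ideal I -> (forall i, I p`_i) -> I p.[x].
Proof.
move=> [I0 ID IM] Ip; rewrite horner_coef; elim/big_ind: _ => // i _.
by rewrite mulrC; apply: IM.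
Qed.

Lemma poly_implies_XsubC (z z' : R) :
  poly_implies ('X - z%:P) ('X - z'%:P) <-> adically_separated (z - z').
Proof.
split.
  move=> [I [m [idI [sepI [h Ih]]]]].
  have I_m : I ((z' - z) ^+ m).
    have -> : (z' - z) ^+ m = (('X - z%:P) ^+ m - ('X - z'%:P) * h).[z'].
      by rewrite !hornerE subrr mul0r subr0.
    exact: ideal_horner.
  apply: (@adically_separated_divides ((z' - z) ^+ m) _ m).
    by exists ((-1) ^+ m); rewrite -exprMn mulrN1 opprB.
  exact: ideal_separated_adically I_m.
move=> sep_zz'; exists (divides (z - z')), 1%N.
split; first exact: divides_ideal.
split; first exact: adically_separated_ideal.
exists 1 => i.
have -> : ('X - z%:P) ^+ 1 - ('X - z'%:P) * 1 = (z' - z)%:P by rewrite polyCB; ring.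
rewrite coefC.
by case: (i == 0%N); [exists (-1); rewrite mulrN1 opprB | apply: divides0].
Qed.

End AdicSeparation.

Lemma adically_separated_mulUl (R : comUnitRingType) (u a : R) :
  u \is a GRing.unit -> adically_separated (u * a) <-> adically_separated a.
Proof.
move=> u_unit; split; apply: (@adically_separated_divides _ _ _ 1%N); rewrite expr1.
  by exists u^-1; rewrite mulrC mulrA mulVr ?mul1r.
by exists u; rewrite mulrC.
Qed.

Lemma not_adically_separated_divides1 (R : comNzRingType) (a : R) :
  divides a 1 -> ~ adically_separated a.
Proof.
move=> [c ac] sep_a; suff /eqP : (1 : R) = 0 by rewrite oner_eq0.
apply: sep_a => j.
by exists (c ^+ j); rewrite -exprMn -ac expr1n.
Qed.

Section Frobenius.
Variables (R : comNzRingType) (p : nat).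
Hypothesis p_pr : prime p.

Lemma divides_expDn_prime (x y : R) :
  divides (p%:R : R) ((x + y) ^+ p - (x ^+ p + y ^+ p)).
Proof.
move: p_pr; case: p => // p' p'_pr.
rewrite exprDn big_ord_recr big_ord_recl /= subnn subn0 bin0 binn !expr0.
have drop_ends (a b c : R) : a + b + c - (a + c) = b by ring.
rewrite !mulr1n mulr1 mul1r drop_ends; apply: divides_sum => i _.
have /dvdnP [e ->] : (p'.+1 %| 'C(p'.+1, bump 0 i))%N.
  by apply: prime_dvd_bin; rewrite // /bump /= add1n ltnS ltn_ord.
by exists (x ^+ (p'.+1 - bump 0 i) * y ^+ bump 0 i * e%:R); rewrite -mulr_natr natrM; ring.
Qed.

Lemma divides_expDn_prime_power k (x y : R) :
  divides (p%:R : R) ((x + y) ^+ (p ^ k) - (x ^+ (p ^ k) + y ^+ (p ^ k))).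
Proof.
elim: k => [|k IHk]; first by rewrite expn0 !expr1 subrr; apply: divides0.
set X := x ^+ (p ^ k); set Y := y ^+ (p ^ k).
have -> : (x + y) ^+ (p ^ k.+1) - (x ^+ (p ^ k.+1) + y ^+ (p ^ k.+1))
    = (((x + y) ^+ (p ^ k)) ^+ p - (X + Y) ^+ p) + ((X + Y) ^+ p - (X ^+ p + Y ^+ p)).
  by rewrite expnSr !exprM addrA subrK.
by apply: dividesD; [apply: divides_subrX | apply: divides_expDn_prime].
Qed.

Lemma divides_subr1_prime_power k (w : R) :
  w ^+ (p ^ k) = 1 -> divides (p%:R : R) ((1 - w) ^+ (p ^ k)).
Proof.
move=> wpk; have pk_gt0 : (0 < p ^ k)%N by rewrite expn_gt0 prime_gt0.
have div1 := divides_expDn_prime_power k 1 (-1).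
have divw := divides_expDn_prime_power k 1 (- w).
rewrite subrr expr0n eqn0Ngt pk_gt0 sub0r in div1.
rewrite exprNn wpk mulr1 in divw.
set c := 1 ^+ (p ^ k) + (-1) ^+ (p ^ k) in div1 divw.
by rewrite -[_ ^+ _](addrNK c) -[X in _ + X]opprK; apply: dividesB.
Qed.

End Frobenius.

Section PrimitiveRoot.
Variables (R : idomainType) (w : R) (d : nat).
Hypothesis w_prim : d.-primitive_root w.

Lemma divides_subr1_prime q : prime q -> (q %| d)%N -> divides (1 - w) (q%:R : R).
Proof.
move=> q_pr qd; pose eta := w ^+ (d %/ q).
have eta_prim : q.-primitive_root eta := dvdn_prim_root w_prim qd.
have eta_neq1 : eta - 1 != 0.
  by rewrite subr_eq0 -[eta]expr1 -(prim_order_dvd eta_prim) dvdn1 neq_ltn prime_gt1 ?orbT.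
have sum_eta : \sum_(i < q) eta ^+ i = 0.
  apply/eqP; have := subrX1 eta q.
  by rewrite prim_expr_order // subrr => /esym/eqP; rewrite mulf_eq0 (negbTE eta_neq1).
have -> : (q%:R : R) = \sum_(i < q) (1 - eta ^+ i).
  by rewrite sumrB sum_eta subr0 sumr_const card_ord.
by apply: divides_sum => i _; rewrite /eta -exprM; apply: divides_subr1X.
Qed.

Lemma adically_separated_subr1_pnat p :
  adically_separated (1 - w) -> prime p -> (p %| d)%N -> p.-nat d.
Proof.
move=> sep_w p_pr pd; apply/pnatP => [|q q_pr qd]; first exact: prim_order_gt0 w_prim.
apply: contraT; rewrite inE => qp; case: (not_adically_separated_divides1 _ sep_w).
apply: divides1_coprime (divides_subr1_prime p_pr pd) (divides_subr1_prime q_pr qd).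
by rewrite prime_coprime // dvdn_prime2 // eq_sym.
Qed.

Lemma adically_separated_subr1_order : (1 < d)%N -> adically_separated (1 - w) ->
  exists p k, [/\ prime p, d = (p ^ k)%N & adically_separated (p%:R : R)].
Proof.
move=> d_gt1 sep_w; have p_pr := pdiv_prime d_gt1.
have [k dk] := p_natP (adically_separated_subr1_pnat sep_w p_pr (pdiv_dvd d)).
exists (pdiv d), k; split=> //.
apply: (@adically_separated_divides _ (1 - w) _ 1%N) sep_w.
by rewrite expr1; apply: divides_subr1_prime (pdiv_dvd d).
Qed.

End PrimitiveRoot.

Lemma adically_separated_subr1_prime_power (R : comNzRingType) (w : R) p k :
  prime p -> w ^+ (p ^ k) = 1 ->
  adically_separated (p%:R : R) -> adically_separated (1 - w).
Proof.
by move=> p_pr wpk; apply: adically_separated_divides (divides_subr1_prime_power p_pr wpk).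
Qed.

Theorem lemma5p1 (R : idomainType) (z z' : R) :
  [pchar R] =i pred0 ->
  is_root_of_unity_R z -> is_root_of_unity_R z' ->
  (poly_implies ('X - z%:P) ('X - z'%:P) <-> adically_separated (z - z'))
  /\
  (adically_separated (z - z') <->
     (z = z' \/
      exists (p k : nat), [/\ prime p, (p ^ k)%N.-primitive_root (z^-1 * z')
                            & adically_separated (p%:R : R)])).
Proof.
move=> _ [n [n_gt0 zn]] [n' [n'_gt0 z'n']].
split; first exact: poly_implies_XsubC.
have z_unit : z \is a GRing.unit by rewrite -(unitrX_pos _ n_gt0) zn unitr1.
set w := z^-1 * z'.
have -> : z - z' = z * (1 - w) by rewrite mulrBr mulr1 /w mulVKr.
rewrite adically_separated_mulUl //.
have w_nn' : w ^+ (n * n') = 1.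
  by rewrite exprMn exprVn exprM zn mulnC exprM z'n' !expr1n invr1 mulr1.
have nn'_gt0 : (0 < n * n')%N by rewrite muln_gt0 n_gt0.
have [d w_prim _] := prim_order_exists nn'_gt0 w_nn'.
split=> [sep_w | [zz' | [p [k [p_pr w_prim' sep_p]]]]].
- have [zz' | zz'] := eqVneq z z'; [by left | right].
  have w_neq1 : w != 1.
    by apply: contra zz' => /eqP w1; rewrite -[z' in _ == z'](mulVKr z_unit) -/w w1 mulr1.
  have d_gt1 : (1 < d)%N.
    rewrite ltn_neqAle (prim_order_gt0 w_prim) andbT; apply: contra w_neq1 => /eqP d1.
    by rewrite -[w]expr1 d1 prim_expr_order.
  have [p [k [p_pr dk sep_p]]] := adically_separated_subr1_order w_prim d_gt1 sep_w.
  by exists p, k; rewrite -dk.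
- by rewrite /w -zz' mulVr // subrr; apply: adically_separated0.
- exact: adically_separated_subr1_prime_power p_pr (prim_expr_order w_prim') sep_p.
Qed.
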